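(* Let $k\ge1$ be an integer. Define \[ G_k=\bigcup_{n=0}^k T_a^{-n}(0)\cap\{x:\varkappa_a(x)\ge k\},\qquad D_k=\bigcup_{n=0}^{k-1}T_a^{-n}\Big(\frac{2a-1}{1-a}\Big)\cup\Big\{\frac1{1-a}\Big\}, \] and $g_k(x)=\max\{y\in G_k:y\le x\}$. (a) For any $a\in(\frac12,\frac23)$: the set $\{x:\varkappa_a(x)\ge k\}$ is a union of finitely many disjoint intervals $\{[g_k(y),y]:y\in D_k\}$; the set of left endpoints of these intervals is $G_k$; and on each of these intervals the functions $\delta_0(x),\dots,\delta_{k-1}(x)$ are constant and $T_a^1(x),\dots,T_a^k(x)$ are continuous and strictly increasing. (b) The assertions of (a) remain valid for $a=\frac23$ if the family of intervals is replaced by $\{[g_k(y-),y):y\in D_k,\,y\neq3\}\cup\{[g_k(3),3]\}$, where $g_k(y-)$ denotes the left limit of $g_k$ at $y$.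
   Context: For $a\in[\frac12,\frac23]$ let $I_a=\big(\frac{2a-1}{1-a},1\big)$ and define $T_a$ on $[0,\frac1{1-a}]\setminus I_a$ by $T_a(x)=\frac1a(x+1)$ for $0\le x\le\frac{2a-1}{1-a}$ and $T_a(x)=\frac1a(x-1)$ for $1\le x\le\frac1{1-a}$; for $a=\frac23$ set $T_{2/3}(1)=0$. For $x\in[0,\frac1{1-a}]$ let $\varkappa_a(x)=\inf\{k\ge0:T_a^k(x)\in I_a\}$ ($\inf\emptyset=\infty$), so $T_a^k(x)$ is defined iff $k\le\varkappa_a(x)$; $T_a^{-n}(z)$ denotes the set of $x$ with $\varkappa_a(x)\ge n$ and $T_a^n(x)=z$. For $0\le k\le\varkappa_a(x)$ put $\delta_k(x)=\mathbb 1\{T_a^k(x)<1\}$. *)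

From Stdlib Require Import Reals Lra ClassicalEpsilon.
From Coquelicot Require Import Coquelicot.
Open Scope R_scope.

Definition ca (a : R) : R := (2 * a - 1) / (1 - a).
Definition Ra (a : R) : R := 1 / (1 - a).

Definition in_Ia (a x : R) : Prop := ca a < x < 1.
Definition in_dom (a x : R) : Prop := 0 <= x <= Ra a.

(* T_a, extended to a total function on R.  On [0,c_a] (x<1) it is (x+1)/a,
   on [1, 1/(1-a)] it is (x-1)/a; for a = 2/3 this gives T(1) = 0 as required. *)
Definition Ta (a x : R) : R := if Rlt_dec x 1 then (x + 1) / a else (x - 1) / a.

Definition Tit (a : R) (n : nat) (x : R) : R := Nat.iter n (Ta a) x.

Definition kappa_ge (a x : R) (n : nat) : Prop :=
  in_dom a x /\ forall j : nat, (j < n)%nat -> ~ in_Ia a (Tit a j x).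

Definition preim (a : R) (n : nat) (z x : R) : Prop :=
  kappa_ge a x n /\ Tit a n x = z.

Definition delta (a : R) (j : nat) (x : R) : nat :=
  if Rlt_dec (Tit a j x) 1 then 1%nat else 0%nat.

Definition Gk (a : R) (k : nat) (x : R) : Prop :=
  (exists n : nat, (n <= k)%nat /\ preim a n 0 x) /\ kappa_ge a x k.

Definition Dk (a : R) (k : nat) (y : R) : Prop :=
  (exists n : nat, (n < k)%nat /\ preim a n (ca a) y) \/ y = Ra a.

Definition is_gk (a : R) (k : nat) (x g : R) : Prop :=
  Gk a k g /\ g <= x /\ forall y, Gk a k y -> y <= x -> y <= g.

(* g_k(x) = max{y in G_k : y <= x} (chosen by classical choice; meaningful
   when the maximum exists) *)
Definition gk (a : R) (k : nat) (x : R) : R :=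
  epsilon (inhabits 0) (fun g => is_gk a k x g).

Definition in_intv (l y : R) (closed : Prop) (x : R) : Prop :=
  l <= x /\ (x < y \/ (closed /\ x = y)).

Definition cont_on (P : R -> Prop) (f : R -> R) : Prop :=
  forall x, P x -> forall eps, 0 < eps -> exists d, 0 < d /\
    forall x', P x' -> Rabs (x' - x) < d -> Rabs (f x' - f x) < eps.

Definition strict_incr_on (P : R -> Prop) (f : R -> R) : Prop :=
  forall x x', P x -> P x' -> x < x' -> f x < f x'.

Definition assertions (a : R) (k : nat) (l : R -> R) (cl : R -> Prop) : Prop :=
  (exists s : list R, forall y, Dk a k y <-> List.In y s) /\
  (forall x, kappa_ge a x k <-> exists y, Dk a k y /\ in_intv (l y) y (cl y) x) /\
  (forall y y', Dk a k y -> Dk a k y' -> y <> y' ->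
     forall x, ~ (in_intv (l y) y (cl y) x /\ in_intv (l y') y' (cl y') x)) /\
  (forall g, Gk a k g <-> exists y, Dk a k y /\ l y = g) /\
  (forall y, Dk a k y -> forall j, (j < k)%nat -> forall x x',
     in_intv (l y) y (cl y) x -> in_intv (l y) y (cl y) x' ->
     delta a j x = delta a j x') /\
  (forall y, Dk a k y -> forall j, (1 <= j <= k)%nat ->
     cont_on (in_intv (l y) y (cl y)) (Tit a j) /\
     strict_incr_on (in_intv (l y) y (cl y)) (Tit a j)).

From Stdlib Require Import Reals Lra Lia List ZArith Classical ClassicalEpsilon.
From Coquelicot Require Import Coquelicot.
Open Scope R_scope.

(* Both branches of T_a have slope 1/a, so on an interval on which
   delta_0, ..., delta_{j-1} are constant, T_a^j is affine with slope a^-j: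
   it is increasing and takes every intermediate value.  Along such an
   interval delta_j can only change, or T_a^j enter the hole (c_a, 1), at a
   point where T_a^j equals c_a or 1.  Moving right from a point with
   kappa_a >= k the first obstruction is a preimage of c_a, a point of D_k;
   moving left it is a preimage of 1, whose next image is 0, a point of G_k.
   So the maximal intervals of {kappa_a >= k} on which the delta_j, j < k,
   are constant run from a point of G_k to a point of D_k.  For a = 2/3 the
   hole is empty and c_a = 1, so the points of D_k other than 3 belong to
   G_k and the intervals become half-open; 0 is not among them because
   2^n T^n(0) is an odd integer for n >= 1. *)

Lemma Tit_S a n x : Tit a (S n) x = Ta a (Tit a n x).
Proof. reflexivity. Qed.

Lemma Tit_add a m n x : Tit a (m + n) x = Tit a m (Tit a n x).
Proof. apply Nat.iter_add. Qed.

Lemma Tit_nonneg a n x : 0 < a -> 0 <= x -> 0 <= Tit a n x.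
Proof.
  intros Ha Hx; induction n as [|n IH]; [exact Hx|].
  rewrite Tit_S; unfold Ta; destruct (Rlt_dec (Tit a n x) 1);
    apply Rdiv_le_0_compat; lra.
Qed.

Lemma Ta_inv a t z : 0 < a -> Ta a t = z -> t = a * z - 1 \/ t = a * z + 1.
Proof.
  intros Ha; unfold Ta; destruct (Rlt_dec t 1); intros <-; [left|right]; field; lra.
Qed.

Lemma Ta_1 a : 0 < a -> Ta a 1 = 0.
Proof. intros Ha; unfold Ta; destruct (Rlt_dec 1 1); [lra|]; field; lra. Qed.

Lemma delta_eq_iff a j x y :
  delta a j x = delta a j y <-> (Tit a j x < 1 <-> Tit a j y < 1).
Proof.
  unfold delta; destruct (Rlt_dec (Tit a j x) 1), (Rlt_dec (Tit a j y) 1);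
    split; intro H; try tauto; try reflexivity; try discriminate; exfalso; tauto.
Qed.

Lemma Tit_affine a j x x' : 0 < a ->
  (forall i, (i < j)%nat -> delta a i x = delta a i x') ->
  Tit a j x' - Tit a j x = (x' - x) / a ^ j.
Proof.
  intros Ha; induction j as [|j IH]; intros Hd; [simpl; field|].
  assert (E := IH (fun i Hi => Hd i (Nat.lt_lt_succ_r _ _ Hi))).
  specialize (Hd j (Nat.lt_succ_diag_r j)); apply delta_eq_iff in Hd.
  assert (Hp : 0 < a ^ j) by (apply pow_lt; lra).
  assert (E' : Tit a j x' = Tit a j x + (x' - x) / a ^ j) by lra.
  rewrite !Tit_S, E' in *; unfold Ta.
  destruct (Rlt_dec (Tit a j x) 1), (Rlt_dec (Tit a j x + (x' - x) / a ^ j) 1);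
    try (exfalso; tauto); simpl; field; lra.
Qed.

Lemma Tit_cont_incr a j (P : R -> Prop) : 0 < a ->
  (forall x x', P x -> P x' -> forall i, (i < j)%nat -> delta a i x = delta a i x') ->
  cont_on P (Tit a j) /\ strict_incr_on P (Tit a j).
Proof.
  intros Ha Hd; assert (Hp : 0 < a ^ j) by (apply pow_lt; lra); split.
  - intros x Px eps He; exists (eps * a ^ j); split; [apply Rmult_lt_0_compat; lra|].
    intros x' Px' Hx; rewrite (Tit_affine a j x x' Ha (Hd x x' Px Px')).
    unfold Rdiv; rewrite Rabs_mult, (Rabs_right (/ a ^ j));
      [|left; apply Rinv_0_lt_compat; exact Hp].
    apply (Rmult_lt_reg_r (a ^ j)); [exact Hp|].
    rewrite Rmult_assoc, Rinv_l; lra.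
  - intros x x' Px Px' Hlt; assert (E := Tit_affine a j x x' Ha (Hd x x' Px Px')).
    assert (0 < (x' - x) / a ^ j) by (apply Rdiv_lt_0_compat; lra); lra.
Qed.

Lemma finite_max (P : R -> Prop) (s : list R) :
  (forall x, P x -> In x s) -> (exists x, P x) ->
  exists m, P m /\ forall x, P x -> x <= m.
Proof.
  revert P; induction s as [|h t IH]; intros P Hs [x Px]; [destruct (Hs x Px)|].
  destruct (classic (exists x, P x /\ x <> h)) as [Hother|Hnone].
  - destruct (IH (fun x => P x /\ x <> h)) as [m [[Pm _] Hm]]; [|exact Hother|].
    { intros y [Py Hy]; destruct (Hs y Py) as [E|Ht]; [congruence|exact Ht]. }
    destruct (classic (P h /\ m < h)) as [[Ph Hlt]|Hno].
    + exists h; split; [exact Ph|]; intros y Py.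
      destruct (Req_dec y h) as [->|Hne]; [lra|]; specialize (Hm y (conj Py Hne)); lra.
    + exists m; split; [exact Pm|]; intros y Py.
      destruct (Req_dec y h) as [->|Hne]; [|exact (Hm y (conj Py Hne))].
      apply Rnot_lt_le; intros Hlt; exact (Hno (conj Py Hlt)).
  - assert (Ph : P h) by (destruct (Req_dec x h) as [<-|Hne]; [exact Px|];
                          exfalso; exact (Hnone (ex_intro _ x (conj Px Hne)))).
    exists h; split; [exact Ph|]; intros y Py.
    destruct (Req_dec y h) as [->|Hne]; [lra|].
    exfalso; exact (Hnone (ex_intro _ y (conj Py Hne))).
Qed.

Lemma finite_min (P : R -> Prop) (s : list R) :
  (forall x, P x -> In x s) -> (exists x, P x) ->
  exists m, P m /\ forall x, P x -> m <= x.
Proof.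
  intros Hs [x Px].
  destruct (finite_max (fun y => P (- y)) (map Ropp s)) as [m [Pm Hm]].
  - intros y Py; rewrite <- (Ropp_involutive y); apply in_map, Hs, Py.
  - exists (- x); rewrite Ropp_involutive; exact Px.
  - exists (- m); split; [exact Pm|]; intros y Py.
    assert (Hy := Hm (- y)); rewrite Ropp_involutive in Hy; specialize (Hy Py); lra.
Qed.

Lemma list_sep (P : R -> Prop) (s : list R) :
  exists s', forall x, In x s' <-> In x s /\ P x.
Proof.
  induction s as [|h t [s' Hs']]; [exists nil; simpl; tauto|].
  destruct (classic (P h)) as [Ph|Nh]; [exists (h :: s')|exists s']; intros x; simpl;
    rewrite Hs'; split; try tauto.
  - intros [<-|H]; tauto.
  - intros [[<-|H] Px]; tauto.
Qed.

Fixpoint preim_list (a : R) (n : nat) (z : R) : list R :=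
  match n with
  | O => z :: nil
  | S m => preim_list a m (a * z - 1) ++ preim_list a m (a * z + 1)
  end.

Lemma in_preim_list a n x : 0 < a -> In x (preim_list a n (Tit a n x)).
Proof.
  intros Ha; induction n as [|n IH]; [left; reflexivity|].
  cbn [preim_list]; apply in_or_app.
  destruct (Ta_inv a _ _ Ha (eq_refl (Tit a (S n) x))) as [E|E];
    rewrite <- E; [left|right]; exact IH.
Qed.

Definition hits (a : R) (k : nat) (z w : R) : Prop :=
  exists j, (j < k)%nat /\ preim a j z w.

Lemma hits_finite a k z : 0 < a -> exists s, forall w, hits a k z w -> In w s.
Proof.
  intros Ha; exists (flat_map (fun n => preim_list a n z) (seq 0 k)).
  intros w [j [Hj [_ <-]]]; apply in_flat_map; exists j.
  split; [apply in_seq; lia|apply in_preim_list, Ha].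
Qed.

Lemma kappa_ge_le a x m n : kappa_ge a x n -> (m <= n)%nat -> kappa_ge a x m.
Proof. intros [Hd Hn] Hm; split; [exact Hd|]; intros j Hj; apply Hn; lia. Qed.

Lemma Gk_iff a k g : 0 < a ->
  Gk a k g <-> kappa_ge a g k /\ (g = 0 \/ hits a k 1 g).
Proof.
  intros Ha; split.
  - intros [[n [Hn [_ HT]]] Hk]; split; [exact Hk|].
    destruct n as [|n]; [left; exact HT|right].
    exists n; split; [lia|split; [apply (kappa_ge_le a g n k Hk); lia|]].
    assert (Hpos : 0 <= Tit a n g) by (apply Tit_nonneg; [exact Ha|apply Hk]).
    rewrite Tit_S in HT; destruct (Ta_inv a _ _ Ha HT) as [E|E]; lra.
  - intros [Hk [->|[j [Hj [_ HT]]]]]; split; try exact Hk.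
    + exists O; split; [lia|split; [apply (kappa_ge_le a 0 O k Hk); lia|reflexivity]].
    + exists (S j); split; [lia|split; [apply (kappa_ge_le a g (S j) k Hk); lia|]].
      rewrite Tit_S, HT; apply Ta_1, Ha.
Qed.

Lemma Gk_finite a k : 0 < a -> exists s, forall g, Gk a k g -> In g s.
Proof.
  intros Ha; destruct (hits_finite a k 1 Ha) as [s Hs]; exists (0 :: s).
  intros g Gg; apply (Gk_iff a k g Ha) in Gg as [_ [->|Hg]]; [left|right]; auto.
Qed.

Lemma Dk_listable a k : 0 < a -> exists s, forall y, Dk a k y <-> In y s.
Proof.
  intros Ha; destruct (hits_finite a k (ca a) Ha) as [s0 Hs0].
  destruct (list_sep (Dk a k) (Ra a :: s0)) as [s Hs]; exists s; intros y.
  rewrite Hs; split; [|tauto]; intros Dy; split; [|exact Dy].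
  destruct Dy as [Hy| ->]; [right; exact (Hs0 y Hy)|left; reflexivity].
Qed.

Lemma gk_eq a k x g : is_gk a k x g -> gk a k x = g.
Proof.
  intros Hg; assert (He := epsilon_spec (inhabits 0) (is_gk a k x) (ex_intro _ g Hg)).
  unfold gk; set (e := epsilon _ _) in *.
  destruct Hg as [G1 [L1 M1]], He as [G2 [L2 M2]].
  apply Rle_antisym; [apply M1|apply M2]; assumption.
Qed.

Lemma in_intv_True l y x : in_intv l y True x <-> l <= x <= y.
Proof. unfold in_intv; split; [intros [? [?|[_ ?]]]; lra|intros [? [?|?]]; tauto]. Qed.

Lemma assertions_intro a k (l : R -> R) (cl : R -> Prop) : 0 < a ->
  (forall x, kappa_ge a x k <-> exists y, Dk a k y /\ in_intv (l y) y (cl y) x) ->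
  (forall y y', Dk a k y -> Dk a k y' -> y < y' ->
     forall x, in_intv (l y) y (cl y) x -> x < l y') ->
  (forall g, Gk a k g <-> exists y, Dk a k y /\ l y = g) ->
  (forall y, Dk a k y -> forall j, (j < k)%nat -> forall x x',
     in_intv (l y) y (cl y) x -> in_intv (l y) y (cl y) x' ->
     delta a j x = delta a j x') ->
  assertions a k l cl.
Proof.
  intros Ha Hcover Hsep Hends Hflat.
  refine (conj (Dk_listable a k Ha) (conj Hcover (conj _ (conj Hends (conj Hflat _))))).
  - intros y y' Dy Dy' Hne x [Hx Hx'].
    destruct (Rtotal_order y y') as [Hlt|[Heq|Hgt]]; [|contradiction|].
    + specialize (Hsep y y' Dy Dy' Hlt x Hx); destruct Hx' as [? _]; lra.
    + specialize (Hsep y' y Dy' Dy Hgt x Hx'); destruct Hx as [? _]; lra.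
  - intros y Dy j Hj; apply Tit_cont_incr; [exact Ha|].
    intros x x' Hx Hx' i Hi; apply (Hflat y Dy i ltac:(lia)); assumption.
Qed.

Definition flat (a : R) (j : nat) (u v : R) : Prop :=
  forall x x', u <= x <= v -> u <= x' <= v ->
  forall i, (i < j)%nat -> delta a i x = delta a i x'.

Definition regular (a : R) (j : nat) (u v : R) : Prop :=
  (forall x, u <= x <= v -> kappa_ge a x j) /\ flat a j u v.

Lemma flat_le a j k u v : flat a k u v -> (j <= k)%nat -> flat a j u v.
Proof. intros Hf Hj x x' Hx Hx' i Hi; apply Hf; auto; lia. Qed.

Lemma Tit_flat_lt a j u v x x' : 0 < a -> flat a j u v ->
  u <= x -> x < x' -> x' <= v -> Tit a j x < Tit a j x'.
Proof.
  intros Ha Hf Hux Hxx' Hx'v.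
  assert (E := Tit_affine a j x x' Ha (Hf x x' ltac:(lra) ltac:(lra))).
  assert (0 < (x' - x) / a ^ j) by (apply Rdiv_lt_0_compat; [lra|apply pow_lt; lra]).
  lra.
Qed.

Lemma Tit_flat_le a j u v x x' : 0 < a -> flat a j u v ->
  u <= x -> x <= x' -> x' <= v -> Tit a j x <= Tit a j x'.
Proof.
  intros Ha Hf Hux Hxx' Hx'v; destruct (Req_dec x x') as [->|Hne]; [lra|].
  left; apply (Tit_flat_lt a j u v); auto; lra.
Qed.

Lemma Tit_ivt a j u v x x' t : 0 < a -> flat a j u v ->
  u <= x -> x <= x' -> x' <= v -> Tit a j x <= t <= Tit a j x' ->
  exists w, x <= w <= x' /\ Tit a j w = t.
Proof.
  intros Ha Hf Hux Hxx' Hx'v Ht.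
  assert (Hp : 0 < a ^ j) by (apply pow_lt; lra).
  assert (E := Tit_affine a j x x' Ha (Hf x x' ltac:(lra) ltac:(lra))).
  set (w := x + (t - Tit a j x) * a ^ j).
  assert (Hw : x <= w <= x').
  { unfold w; split; [assert (0 <= (t - Tit a j x) * a ^ j) by (apply Rmult_le_pos; lra); lra|].
    assert (H : (t - Tit a j x) * a ^ j <= (Tit a j x' - Tit a j x) * a ^ j)
      by (apply Rmult_le_compat_r; lra).
    rewrite E in H; replace ((x' - x) / a ^ j * a ^ j) with (x' - x) in H by (field; lra).
    lra. }
  exists w; split; [exact Hw|].
  assert (Ew := Tit_affine a j x w Ha (Hf x w ltac:(lra) ltac:(lra))).
  assert (Ew' : (w - x) / a ^ j = t - Tit a j x) by (unfold w; field; lra).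
  lra.
Qed.

Lemma regular_0 a u v : (forall x, u <= x <= v -> in_dom a x) -> regular a 0 u v.
Proof.
  intros Hd; split; [intros x Hx; split; [auto|intros j Hj; lia]|intros x x' _ _ i Hi; lia].
Qed.

Lemma regular_S a j u v b : u <= b <= v -> regular a j u v ->
  (forall x, u <= x <= v -> ~ in_Ia a (Tit a j x) /\ (Tit a j x < 1 <-> Tit a j b < 1)) ->
  regular a (S j) u v.
Proof.
  intros Hb [Hk Hf] Hstep; split.
  - intros x Hx; destruct (Hk x Hx) as [Hd Hj]; split; [exact Hd|].
    intros i Hi; destruct (Nat.eq_dec i j) as [->|Hne]; [apply Hstep, Hx|apply Hj; lia].
  - intros x x' Hx Hx' i Hi; destruct (Nat.eq_dec i j) as [->|Hne]; [|apply Hf; auto; lia].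
    apply delta_eq_iff; destruct (Hstep x Hx) as [_ E]; destruct (Hstep x' Hx') as [_ E'].
    tauto.
Qed.

Section AtMostTwoThirds.
Variable a : R.
Hypothesis Ha : 0 < a <= 2/3.

Lemma ca_le_1 : ca a <= 1.
Proof.
  unfold ca; replace ((2 * a - 1) / (1 - a)) with (1 - (2 - 3 * a) / (1 - a)) by (field; lra).
  assert (0 <= (2 - 3 * a) / (1 - a)) by (apply Rdiv_le_0_compat; lra); lra.
Qed.

(* Moving left from [v], T^j can only leave the half-line [T^j < 1] or the
   half-line [T^j >= 1] by passing through 1. *)
Lemma regular_from_right k u v : kappa_ge a v k -> 0 <= u <= v ->
  (forall w, u < w <= v -> ~ hits a k 1 w) -> regular a k u v.
Proof.
  intros Hv Huv Hno.
  enough (Hreg : forall j, (j <= k)%nat -> regular a j u v) by (apply Hreg; lia).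
  induction j as [|j IH]; intros Hj.
  - apply regular_0; intros x Hx; destruct Hv as [[_ ?] _]; split; lra.
  - destruct (IH ltac:(lia)) as [Hk Hf]; apply regular_S with v; [lra|split; auto|].
    intros x Hx.
    assert (Hvj : ~ in_Ia a (Tit a j v)) by (apply Hv; lia).
    assert (Hxv : Tit a j x <= Tit a j v) by (apply (Tit_flat_le a j u v); auto; lra).
    pose proof ca_le_1; unfold in_Ia in *.
    destruct (Rlt_dec (Tit a j v) 1) as [Hlt|Hge]; [split; [lra|split; intro; lra]|].
    destruct (Rlt_dec (Tit a j x) 1) as [Hx1|Hx1]; [exfalso|split; [lra|split; intro; lra]].
    destruct (Tit_ivt a j u v x v 1) as [w [Hw Tw]]; auto; try lra.
    assert (w <> x) by (intros ->; lra).
    apply (Hno w); [lra|exists j; split; [lia|split; [apply Hk; lra|exact Tw]]].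
Qed.

Lemma gk_regular k y : kappa_ge a y k ->
  is_gk a k y (gk a k y) /\ regular a k (gk a k y) y.
Proof.
  intros Hy; assert (Ha0 : 0 < a) by lra.
  destruct (hits_finite a k 1 Ha0) as [s Hs].
  destruct (finite_max (fun w => 0 <= w <= y /\ (w = 0 \/ hits a k 1 w)) (0 :: s))
    as [u [[Hu Pu] Hmax]].
  { intros w [_ [->|Hw]]; [left; reflexivity|right; exact (Hs w Hw)]. }
  { exists 0; split; [destruct Hy as [[? _] _]; lra|left; reflexivity]. }
  assert (Hreg : regular a k u y).
  { apply regular_from_right; [exact Hy|exact Hu|].
    intros w Hw Hh; assert (w <= u) by (apply Hmax; split; [lra|right; exact Hh]); lra. }
  assert (Hg : is_gk a k y u).
  { split; [apply (Gk_iff a k u Ha0); split; [apply Hreg; lra|exact Pu]|split; [lra|]].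
    intros g Gg Hgy; apply (Gk_iff a k g Ha0) in Gg as [[[Hg0 _] _] Hg].
    apply Hmax; split; [lra|exact Hg]. }
  rewrite (gk_eq a k y u Hg); split; assumption.
Qed.

Section BelowTwoThirds.
Hypothesis Ha_lt : a < 2/3.

Lemma ca_lt_1 : ca a < 1.
Proof.
  unfold ca; replace ((2 * a - 1) / (1 - a)) with (1 - (2 - 3 * a) / (1 - a)) by (field; lra).
  assert (0 < (2 - 3 * a) / (1 - a)) by (apply Rdiv_lt_0_compat; lra); lra.
Qed.

Lemma Ra_ge_1 : 1 <= Ra a.
Proof.
  unfold Ra; replace (1 / (1 - a)) with (1 + a / (1 - a)) by (field; lra).
  assert (0 < a / (1 - a)) by (apply Rdiv_lt_0_compat; lra); lra.
Qed.

Lemma Tit_Ra n : Tit a n (Ra a) = Ra a.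
Proof.
  induction n as [|n IH]; [reflexivity|]; rewrite Tit_S, IH.
  pose proof Ra_ge_1; unfold Ta; destruct (Rlt_dec (Ra a) 1); [lra|].
  unfold Ra; field; lra.
Qed.

Lemma Ta_ca : Ta a (ca a) = Ra a.
Proof.
  pose proof ca_lt_1; unfold Ta; destruct (Rlt_dec (ca a) 1); [|lra].
  unfold Ra, ca; field; lra.
Qed.

(* An orbit reaching c_a continues with the fixed point 1/(1-a). *)
Lemma Dk_kappa_ge k y : Dk a k y -> kappa_ge a y k.
Proof.
  pose proof ca_lt_1; pose proof Ra_ge_1.
  intros [[n [Hn [[Hd Hkn] HT]]]| ->].
  - split; [exact Hd|]; intros m Hm.
    destruct (lt_dec m n) as [Hmn|Hmn]; [apply Hkn, Hmn|].
    destruct (Nat.eq_dec m n) as [->|Hne]; [rewrite HT; unfold in_Ia; lra|].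
    replace m with ((m - S n) + S n)%nat by lia.
    rewrite Tit_add, Tit_S, HT, Ta_ca, Tit_Ra; unfold in_Ia; lra.
  - split; [unfold in_dom; lra|]; intros m _; rewrite Tit_Ra; unfold in_Ia; lra.
Qed.

Lemma Dk_gk_regular k y : Dk a k y ->
  is_gk a k y (gk a k y) /\ regular a k (gk a k y) y.
Proof. intros Dy; apply gk_regular, Dk_kappa_ge, Dy. Qed.

(* Moving right from [u], T^j can only enter the hole through c_a. *)
Lemma regular_from_left k u v : kappa_ge a u k -> u <= v -> v <= Ra a ->
  (forall w, u <= w < v -> ~ hits a k (ca a) w) -> regular a k u v.
Proof.
  intros Hu Huv HvR Hno.
  enough (Hreg : forall j, (j <= k)%nat -> regular a j u v) by (apply Hreg; lia).
  induction j as [|j IH]; intros Hj.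
  - apply regular_0; intros x Hx; destruct Hu as [[? _] _]; split; lra.
  - destruct (IH ltac:(lia)) as [Hk Hf]; apply regular_S with u; [lra|split; auto|].
    intros x Hx.
    assert (Huj : ~ in_Ia a (Tit a j u)) by (apply Hu; lia).
    assert (Hux : Tit a j u <= Tit a j x) by (apply (Tit_flat_le a j u v); auto; lra).
    pose proof ca_lt_1; unfold in_Ia in *.
    destruct (Rlt_dec (Tit a j u) 1) as [Hlt|Hge]; [|split; [lra|split; intro; lra]].
    destruct (Rle_dec (Tit a j x) (ca a)) as [Hxc|Hxc];
      [split; [lra|split; intro; lra]|exfalso].
    destruct (Tit_ivt a j u v u x (ca a)) as [w [Hw Tw]]; auto; try lra.
    assert (w <> x) by (intros ->; lra).
    apply (Hno w); [lra|exists j; split; [lia|split; [apply Hk; lra|exact Tw]]].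
Qed.

Lemma regular_no_crossing k u v j x x' : regular a k u v -> (j < k)%nat ->
  u <= x -> x <= x' -> x' <= v -> Tit a j x <= ca a -> 1 <= Tit a j x' -> False.
Proof.
  intros [Hk Hf] Hj Hux Hxx' Hx'v Hx Hx'; pose proof ca_lt_1.
  destruct (Tit_ivt a j u v x x' ((ca a + 1) / 2)) as [z [Hz Tz]];
    [lra|apply (flat_le a j k); auto; lia|lra|lra|lra|lra|].
  apply (proj2 (Hk z ltac:(lra)) j Hj); unfold in_Ia; lra.
Qed.

Lemma regular_no_hits k u v : regular a k u v ->
  (forall w, u < w <= v -> ~ hits a k 1 w) /\
  (forall w, u <= w < v -> ~ hits a k (ca a) w).
Proof.
  intros Hreg; pose proof Hreg as [Hk Hf]; pose proof ca_lt_1.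
  assert (Hfj : forall j, (j < k)%nat -> flat a j u v) by (intros; apply (flat_le a j k); auto; lia).
  split; intros w Hw [j [Hj [_ Tw]]].
  - assert (Hu : Tit a j u < 1)
      by (rewrite <- Tw; apply (Tit_flat_lt a j u v); auto; lra).
    assert (~ in_Ia a (Tit a j u)) by (apply (Hk u); [lra|exact Hj]).
    apply (regular_no_crossing k u v j u w); auto; try lra; unfold in_Ia in *; lra.
  - assert (Hv : ca a < Tit a j v)
      by (rewrite <- Tw; apply (Tit_flat_lt a j u v); auto; lra).
    assert (~ in_Ia a (Tit a j v)) by (apply (Hk v); [lra|exact Hj]).
    apply (regular_no_crossing k u v j w v); auto; try lra; unfold in_Ia in *; lra.
Qed.

Lemma Dk_cover k x : kappa_ge a x k -> exists y, Dk a k y /\ gk a k y <= x <= y.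
Proof.
  intros Hx; destruct (Dk_listable a k ltac:(lra)) as [s Hs].
  destruct (finite_min (fun y => Dk a k y /\ x <= y) s) as [y [[Dy Hxy] Hmin]].
  { intros y [Dy _]; apply Hs, Dy. }
  { exists (Ra a); split; [right; reflexivity|apply Hx]. }
  assert (Hreg : regular a k x y).
  { apply regular_from_left; [exact Hx|exact Hxy|apply (Dk_kappa_ge k y Dy)|].
    intros w Hw Hc; assert (y <= w) by (apply Hmin; split; [left; exact Hc|lra]); lra. }
  destruct (Dk_gk_regular k y Dy) as [[Gg [Hgy _]] _].
  exists y; split; [exact Dy|split; [|exact Hxy]].
  apply Rnot_lt_le; intros Hlt.
  apply (Gk_iff a k _ ltac:(lra)) in Gg as [_ [G0|G1]].
  - destruct Hx as [[? _] _]; lra.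
  - apply (proj1 (regular_no_hits k x y Hreg) (gk a k y)); [lra|exact G1].
Qed.

Lemma part_a k :
  (forall y, Dk a k y -> is_gk a k y (gk a k y)) /\
  assertions a k (gk a k) (fun _ => True).
Proof.
  split; [intros y Dy; apply (Dk_gk_regular k y Dy)|].
  apply assertions_intro; [lra| | | |].
  - intros x; split.
    + intros Hx; destruct (Dk_cover k x Hx) as [y [Dy Hy]].
      exists y; split; [exact Dy|apply in_intv_True, Hy].
    + intros [y [Dy Hy]]; apply in_intv_True in Hy; apply (Dk_gk_regular k y Dy), Hy.
  - intros y y' Dy Dy' Hlt x Hx; apply in_intv_True in Hx.
    assert (Hy : hits a k (ca a) y).
    { destruct Dy as [Hc| ->]; [exact Hc|exfalso].
      destruct (Dk_kappa_ge k y' Dy') as [[_ ?] _]; lra. }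
    destruct (Dk_gk_regular k y' Dy') as [[_ [Hg' _]] Hreg].
    apply Rnot_le_lt; intros Hge.
    apply (proj2 (regular_no_hits k _ _ Hreg) y); [lra|exact Hy].
  - intros g; split.
    + intros Gg; destruct (Dk_cover k g (proj2 Gg)) as [y [Dy Hy]].
      exists y; split; [exact Dy|].
      destruct (Dk_gk_regular k y Dy) as [[_ [_ Hmax]] _].
      specialize (Hmax g Gg (proj2 Hy)); lra.
    + intros [y [Dy <-]]; apply (Dk_gk_regular k y Dy).
  - intros y Dy j Hj x x' Hx Hx'; apply in_intv_True in Hx, Hx'.
    destruct (Dk_gk_regular k y Dy) as [_ [_ Hf]]; apply Hf; assumption.
Qed.

End BelowTwoThirds.
End AtMostTwoThirds.

Lemma kappa_ge_two_thirds x n : kappa_ge (2/3) x n <-> 0 <= x <= 3.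
Proof.
  unfold kappa_ge, in_dom, in_Ia, ca, Ra.
  replace ((2 * (2/3) - 1) / (1 - 2/3)) with 1 by field.
  replace (1 / (1 - 2/3)) with 3 by field.
  split; [tauto|]; intros H; split; [exact H|]; intros j _; lra.
Qed.

Lemma Tit_two_thirds_3 n : Tit (2/3) n 3 = 3.
Proof.
  induction n as [|n IH]; [reflexivity|]; rewrite Tit_S, IH; unfold Ta.
  destruct (Rlt_dec 3 1); [lra|]; field.
Qed.

Lemma Tit_two_thirds_0_odd n : exists p, Tit (2/3) (S n) 0 * 2 ^ S n = IZR (2 * p + 1).
Proof.
  induction n as [|n [p Hp]].
  - exists 1%Z; change (Ta (2/3) 0 * (2 * 1) = 3); unfold Ta.
    destruct (Rlt_dec 0 1); [field|lra].
  - assert (Hq : 2 ^ S n = IZR (2 * 2 ^ Z.of_nat n)) by (rewrite mult_IZR, <- pow_IZR; reflexivity).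
    rewrite Tit_S; set (t := Tit (2/3) (S n) 0) in *.
    rewrite plus_IZR, mult_IZR in Hp; rewrite mult_IZR in Hq.
    replace (2 ^ S (S n)) with (2 * 2 ^ S n) by reflexivity.
    unfold Ta; destruct (Rlt_dec t 1).
    + exists (3 * p + 3 * 2 ^ Z.of_nat n + 1)%Z.
      replace ((t + 1) / (2/3) * (2 * 2 ^ S n)) with (3 * (t * 2 ^ S n) + 3 * 2 ^ S n) by field.
      rewrite Hp, Hq; repeat rewrite ?plus_IZR, ?mult_IZR; ring.
    + exists (3 * p - 3 * 2 ^ Z.of_nat n + 1)%Z.
      replace ((t - 1) / (2/3) * (2 * 2 ^ S n)) with (3 * (t * 2 ^ S n) - 3 * 2 ^ S n) by field.
      rewrite Hp, Hq; repeat rewrite ?plus_IZR, ?minus_IZR, ?mult_IZR; ring.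
Qed.

Lemma Tit_two_thirds_0_ne_1 n : Tit (2/3) n 0 <> 1.
Proof.
  destruct n as [|n]; [simpl; lra|]; intros E.
  destruct (Tit_two_thirds_0_odd n) as [p Hp].
  assert (Hq : 2 ^ S n = IZR (2 * 2 ^ Z.of_nat n)) by (rewrite mult_IZR, <- pow_IZR; reflexivity).
  rewrite E, Rmult_1_l, Hq in Hp; apply eq_IZR in Hp; lia.
Qed.

Section TwoThirds.
Variable k : nat.

Lemma Gk_two_thirds_iff g : Gk (2/3) k g <-> 0 <= g <= 3 /\ (g = 0 \/ hits (2/3) k 1 g).
Proof. rewrite Gk_iff, kappa_ge_two_thirds by lra; reflexivity. Qed.

Lemma Dk_two_thirds_iff y : Dk (2/3) k y <-> y = 3 \/ (Gk (2/3) k y /\ y <> 0).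
Proof.
  assert (Hc : ca (2/3) = 1) by (unfold ca; field).
  assert (HR : Ra (2/3) = 3) by (unfold Ra; field).
  unfold Dk; fold (hits (2/3) k (ca (2/3)) y); rewrite Hc, HR, Gk_two_thirds_iff.
  split.
  - intros [Hy| ->]; [right|left; reflexivity].
    pose proof Hy as [j [_ [Hkj HT]]]; apply kappa_ge_two_thirds in Hkj.
    split; [split; [exact Hkj|right; exact Hy]|].
    intros ->; exact (Tit_two_thirds_0_ne_1 j HT).
  - intros [-> |[[_ [->|Hy]] Hne]]; [right; reflexivity|contradiction|left; exact Hy].
Qed.

Lemma Gk_two_thirds_0 : Gk (2/3) k 0.
Proof. apply Gk_two_thirds_iff; split; [lra|left; reflexivity]. Qed.

Lemma Gk_two_thirds_not_3 : ~ Gk (2/3) k 3.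
Proof.
  intros G3; apply Gk_two_thirds_iff in G3 as [_ [E|[j [_ [_ HT]]]]]; [lra|].
  rewrite Tit_two_thirds_3 in HT; lra.
Qed.

Lemma gk_two_thirds_3 : is_gk (2/3) k 3 (gk (2/3) k 3) /\ regular (2/3) k (gk (2/3) k 3) 3.
Proof. apply gk_regular; [lra|apply kappa_ge_two_thirds; lra]. Qed.

Definition is_gk_left (y g : R) : Prop :=
  Gk (2/3) k g /\ g < y /\ forall g', Gk (2/3) k g' -> g' < y -> g' <= g.

Definition gk_left (y : R) : R := epsilon (inhabits 0) (is_gk_left y).

Definition gk_endpoint (y : R) : R := if Req_EM_T y 3 then gk (2/3) k 3 else gk_left y.

Lemma gk_endpoint_spec y : Dk (2/3) k y ->
  Gk (2/3) k (gk_endpoint y) /\ gk_endpoint y <= y /\ (y <> 3 -> gk_endpoint y < y) /\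
  forall g, Gk (2/3) k g -> g < y -> g <= gk_endpoint y.
Proof.
  intros Dy; unfold gk_endpoint; destruct (Req_EM_T y 3) as [->|Hne].
  - destruct gk_two_thirds_3 as [[G [Hle Hmax]] _].
    split; [exact G|split; [exact Hle|split; [congruence|]]].
    intros g Gg Hg; apply Hmax; [exact Gg|lra].
  - apply Dk_two_thirds_iff in Dy as [E|[Gy Hy0]]; [contradiction|].
    assert (Hy : 0 < y) by (apply Gk_two_thirds_iff in Gy as [? _]; lra).
    destruct (Gk_finite (2/3) k ltac:(lra)) as [s Hs].
    destruct (finite_max (fun g => Gk (2/3) k g /\ g < y) s) as [m [[Gm Hm] Hmax]].
    { intros g [Gg _]; apply Hs, Gg. }
    { exists 0; split; [exact Gk_two_thirds_0|exact Hy]. }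
    destruct (epsilon_spec (inhabits 0) (is_gk_left y)) as [G [Hlt Hmax']].
    { exists m; split; [exact Gm|split; [exact Hm|]]; intros g' Gg' Hg'; apply Hmax; auto. }
    fold (gk_left y) in G, Hlt, Hmax'.
    split; [exact G|split; [lra|split; [intros _; exact Hlt|exact Hmax']]].
Qed.

Lemma gk_two_thirds_left y x : Dk (2/3) k y -> y <> 3 ->
  gk_endpoint y <= x < y -> gk (2/3) k x = gk_endpoint y.
Proof.
  intros Dy Hne Hx; destruct (gk_endpoint_spec y Dy) as [G [_ [_ Hmax]]].
  apply gk_eq; split; [exact G|split; [lra|]].
  intros g Gg Hg; apply Hmax; [exact Gg|lra].
Qed.

Lemma in_intv_gk_endpoint y x : Dk (2/3) k y ->
  in_intv (gk_endpoint y) y (y = 3) x <-> gk_endpoint y <= x /\ (x < y \/ y = 3 /\ x = 3).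
Proof.
  intros Dy; unfold in_intv; split; intros [Hl Hx]; split; auto;
    destruct Hx as [|[-> ->]]; auto.
Qed.

Lemma gk_endpoint_flat y : Dk (2/3) k y -> forall j, (j < k)%nat -> forall x x',
  in_intv (gk_endpoint y) y (y = 3) x -> in_intv (gk_endpoint y) y (y = 3) x' ->
  delta (2/3) j x = delta (2/3) j x'.
Proof.
  intros Dy j Hj.
  destruct (Req_EM_T y 3) as [->|Hne].
  - destruct gk_two_thirds_3 as [_ [_ Hf]].
    unfold gk_endpoint; destruct (Req_EM_T 3 3) as [_|]; [|contradiction].
    intros x x' [Hx [Hx3|[_ ->]]] [Hx' [Hx'3|[_ ->]]]; apply Hf; auto; lra.
  - (* each [x] of [[g(y-), y)] lies in the regular interval [[gk x, x]], and [gk x = g(y-)] *)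
    assert (Hbase : forall x, gk_endpoint y <= x < y ->
              delta (2/3) j x = delta (2/3) j (gk_endpoint y)).
    { intros x Hx; destruct (gk_endpoint_spec y Dy) as [G _].
      assert (Hx3 : 0 <= x <= 3).
      { apply Gk_two_thirds_iff in G as [? _].
        apply Dk_two_thirds_iff in Dy as [?|[Gy _]]; [contradiction|].
        apply Gk_two_thirds_iff in Gy as [? _]; lra. }
      destruct (gk_regular (2/3) ltac:(lra) k x (proj2 (kappa_ge_two_thirds x k) Hx3))
        as [_ [_ Hf]].
      rewrite (gk_two_thirds_left y x Dy Hne Hx) in Hf; apply Hf; auto; lra. }
    intros x x' [Hx [Hxy|[C _]]] [Hx' [Hx'y|[C' _]]]; try contradiction.
    rewrite (Hbase x), (Hbase x'); auto.
Qed.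

Lemma Gk_two_thirds_next x : 0 <= x < gk (2/3) k 3 ->
  exists s, Dk (2/3) k s /\ s <> 3 /\ gk_endpoint s <= x < s.
Proof.
  intros Hx; destruct (Gk_finite (2/3) k ltac:(lra)) as [l Hl].
  destruct (finite_min (fun g => Gk (2/3) k g /\ x < g) l) as [s [[Gs Hxs] Hmin]].
  { intros g [Gg _]; apply Hl, Gg. }
  { exists (gk (2/3) k 3); split; [apply gk_two_thirds_3|lra]. }
  assert (Hs3 : s <> 3) by (intros ->; exact (Gk_two_thirds_not_3 Gs)).
  assert (Ds : Dk (2/3) k s) by (apply Dk_two_thirds_iff; right; split; [exact Gs|lra]).
  exists s; split; [exact Ds|split; [exact Hs3|split; [|exact Hxs]]].
  destruct (gk_endpoint_spec s Ds) as [G [_ [Hlt _]]].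
  apply Rnot_lt_le; intros Hgt.
  assert (s <= gk_endpoint s) by (apply Hmin; split; [exact G|exact Hgt]).
  specialize (Hlt Hs3); lra.
Qed.

Lemma kappa_ge_two_thirds_cover x : kappa_ge (2/3) x k <->
  exists y, Dk (2/3) k y /\ in_intv (gk_endpoint y) y (y = 3) x.
Proof.
  rewrite kappa_ge_two_thirds; split.
  - intros Hx; destruct (Rlt_le_dec x (gk (2/3) k 3)) as [Hlt|Hge].
    + destruct (Gk_two_thirds_next x (conj (proj1 Hx) Hlt)) as [s [Ds [_ Hs]]].
      exists s; split; [exact Ds|apply (in_intv_gk_endpoint s x Ds); tauto].
    + assert (D3 : Dk (2/3) k 3) by (apply Dk_two_thirds_iff; left; reflexivity).
      exists 3; split; [exact D3|apply (in_intv_gk_endpoint 3 x D3)].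
      unfold gk_endpoint at 1; destruct (Req_EM_T 3 3); [|contradiction].
      split; [exact Hge|]; destruct (Req_dec x 3); [right|left]; lra.
  - intros [y [Dy Hx]]; apply (in_intv_gk_endpoint y x Dy) in Hx as [Hl Hx].
    destruct (gk_endpoint_spec y Dy) as [G _]; apply Gk_two_thirds_iff in G as [? _].
    apply Dk_two_thirds_iff in Dy as [-> |[Gy _]]; [lra|].
    apply Gk_two_thirds_iff in Gy as [? _]; lra.
Qed.

Lemma gk_endpoint_sep y y' : Dk (2/3) k y -> Dk (2/3) k y' -> y < y' ->
  forall x, in_intv (gk_endpoint y) y (y = 3) x -> x < gk_endpoint y'.
Proof.
  intros Dy Dy' Hlt x Hx; apply (in_intv_gk_endpoint y x Dy) in Hx as [_ Hx].
  assert (Hy' : y' <= 3).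
  { apply Dk_two_thirds_iff in Dy' as [-> |[Gy' _]]; [lra|].
    apply Gk_two_thirds_iff in Gy' as [? _]; lra. }
  apply Dk_two_thirds_iff in Dy as [-> |[Gy _]]; [lra|].
  destruct (gk_endpoint_spec y' Dy') as [_ [_ [_ Hmax]]].
  specialize (Hmax y Gy Hlt); destruct Hx as [|[? _]]; lra.
Qed.

Lemma Gk_two_thirds_endpoints g : Gk (2/3) k g <-> exists y, Dk (2/3) k y /\ gk_endpoint y = g.
Proof.
  split; [|intros [y [Dy <-]]; apply (gk_endpoint_spec y Dy)].
  intros Gg; assert (Hg : 0 <= g <= 3) by (apply Gk_two_thirds_iff in Gg as [Hb _]; exact Hb).
  destruct (Rlt_le_dec g (gk (2/3) k 3)) as [Hlt|Hge].
  - destruct (Gk_two_thirds_next g (conj (proj1 Hg) Hlt)) as [s [Ds [_ [Hs Hgs]]]].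
    exists s; split; [exact Ds|].
    destruct (gk_endpoint_spec s Ds) as [_ [_ [_ Hmax]]].
    specialize (Hmax g Gg Hgs); lra.
  - exists 3; split; [apply Dk_two_thirds_iff; left; reflexivity|].
    unfold gk_endpoint; destruct (Req_EM_T 3 3); [|contradiction].
    destruct gk_two_thirds_3 as [[_ [_ Hmax]] _].
    specialize (Hmax g Gg ltac:(lra)); lra.
Qed.

Lemma gk_two_thirds_left_limit y : Dk (2/3) k y -> y <> 3 ->
  filterlim (gk (2/3) k) (at_left y) (locally (gk_endpoint y)).
Proof.
  intros Dy Hne; apply filterlim_ext_loc with (f := fun _ => gk_endpoint y);
    [|apply filterlim_const].
  destruct (gk_endpoint_spec y Dy) as [_ [_ [Hlt _]]]; specialize (Hlt Hne).
  assert (Hp : 0 < y - gk_endpoint y) by lra.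
  exists (mkposreal _ Hp); intros x Hb Hx; apply Rabs_lt_between' in Hb; simpl in Hb.
  symmetry; apply gk_two_thirds_left; auto; lra.
Qed.

Lemma part_b : exists l : R -> R,
  (forall y, Dk (2/3) k y -> y <> 3 -> filterlim (gk (2/3) k) (at_left y) (locally (l y))) /\
  is_gk (2/3) k 3 (gk (2/3) k 3) /\ l 3 = gk (2/3) k 3 /\
  assertions (2/3) k l (fun y => y = 3).
Proof.
  exists gk_endpoint; split; [exact gk_two_thirds_left_limit|].
  split; [apply gk_two_thirds_3|split].
  - unfold gk_endpoint; destruct (Req_EM_T 3 3); [reflexivity|contradiction].
  - apply assertions_intro; [lra|exact kappa_ge_two_thirds_cover|exact gk_endpoint_sep
                           |exact Gk_two_thirds_endpoints|exact gk_endpoint_flat].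
Qed.

End TwoThirds.

Theorem lemma3p3 (k : nat) (hk : (1 <= k)%nat) :
  (* (a) *)
  (forall a : R, 1/2 < a < 2/3 ->
     (forall y, Dk a k y -> is_gk a k y (gk a k y)) /\
     assertions a k (gk a k) (fun _ => True)) /\
  (* (b) a = 2/3, with intervals [g_k(y-), y) for y <> 3 and [g_k(3), 3] *)
  (let a := 2/3 in
   exists l : R -> R,
     (forall y, Dk a k y -> y <> 3 ->
        filterlim (gk a k) (at_left y) (locally (l y))) /\
     is_gk a k 3 (gk a k 3) /\ l 3 = gk a k 3 /\
     assertions a k l (fun y => y = 3)).
Proof.
  split.
  - intros a Ha; apply part_a; lra.
  - exact (part_b k).
Qed.
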